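(* Let $(R,\mathfrak m)$ be a regular local ring with $\dim R\ge 2$, let $\{(R_i,\mathfrak m_i)\}_{i\ge 0}$ be an infinite sequence of local quadratic transforms with $R_0=R$, and let $S=\bigcup_{i\ge0}R_i$ with maximal ideal $N=\bigcup_i\mathfrak m_i$. For $x\in S$ the following are equivalent: (1) $N=xS$; (2) $P:=\bigcap_{i>0}N^i$ is a prime ideal, $S/P$ is a DVR whose maximal ideal is the image of $xS$, and $P=PS_P$; (3) for every valuation ring $V$ that birationally dominates $S$, $\mathfrak m_iV=xV$ for all $i\gg0$; (4) $x$ is a regular parameter of $R_i$ (i.e. $x\in\mathfrak m_i\setminus\mathfrak m_i^2$) for all $i\gg0$.
   Context: A local quadratic transform of a regular local ring $(A,\mathfrak n)$ is a local ring $A[\mathfrak n/y]_{\mathfrak q}$ with $y\in\mathfrak n\setminus\mathfrak n^2$ and $\mathfrak q$ a prime ideal of $A[\mathfrak n/y]$ containing $\mathfrak n$. The sequence satisfies: for each $i\ge 0$, $R_{i+1}$ is a local quadratic transform of $R_i$, $R_i\subsetneq R_{i+1}$, and each $R_i$ is a regular local ring of dimension at least $2$ with maximal ideal $\mathfrak m_i$. A valuation ring $V$ birationally dominates $S$ if $V$ lies in the quotient field of $S$, contains $S$, and its maximal ideal contracts to $N$. *)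

(* Commutative algebra inside a fixed field K:
   all rings considered are subrings of K, represented as predicates K -> Prop. *)
From mathcomp Require Import all_boot all_algebra.
Set Implicit Arguments. Unset Strict Implicit. Unset Printing Implicit Defensive.
Import GRing.Theory.
Local Open Scope ring_scope.

Section CommAlg.
Variable K : fieldType.
Implicit Types (A B C I J V G : K -> Prop).

Definition sub_set A B := forall z, A z -> B z.

Definition subring A :=
  [/\ A 1, (forall a b, A a -> A b -> A (a - b)) & (forall a b, A a -> A b -> A (a * b))].

Definition ideal A I :=
  [/\ sub_set I A, I 0, (forall a b, I a -> I b -> I (a + b))
    & (forall a b, A a -> I b -> I (a * b))].

Definition unit_in A a := A a /\ exists b, A b /\ a * b = 1.

(* the set of non-units of A (the maximal ideal when A is local) *)
Definition maxideal A z := A z /\ ~ unit_in A z.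

Definition local_ring A := subring A /\ ideal A (maxideal A).

Definition prime_ideal A P :=
  [/\ ideal A P, ~ P 1 & forall a b, A a -> A b -> P (a * b) -> P a \/ P b].

Definition ideal_span A G z :=
  exists s : seq (K * K), (forall t, t \in s -> A t.1 /\ G t.2) /\
    z = \sum_(t <- s) t.1 * t.2.

Definition fin_gen A I :=
  exists g : seq K, (forall a, a \in g -> A a) /\ I = ideal_span A (fun z => z \in g).

Definition noetherian A := forall I, ideal A I -> fin_gen A I.

Definition ideal_pow A I (k : nat) :=
  ideal_span A (fun z => exists s : seq K,
            [/\ size s = k, (forall a, a \in s -> I a) & z = \prod_(a <- s) a]).

Definition prime_chain A (n : nat) :=
  exists P : nat -> K -> Prop,
    (forall j, (j <= n)%N -> prime_ideal A (P j)) /\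
    (forall j, (j < n)%N -> sub_set (P j) (P j.+1) /\ P j <> P j.+1).

Definition krull_dim A (d : nat) :=
  prime_chain A d /\ forall n, prime_chain A n -> (n <= d)%N.

Definition regular_local A (d : nat) :=
  [/\ local_ring A, noetherian A, krull_dim A d &
      exists g : seq K, [/\ size g = d, (forall a, a \in g -> A a)
                         & maxideal A = ideal_span A (fun z => z \in g)]].

Definition adjoin A G z :=
  forall C, subring C -> sub_set A C -> sub_set G C -> C z.

Definition blowup A (y : K) := adjoin A (fun z => exists a, maxideal A a /\ z = a / y).

Definition localize C q z := exists a b, [/\ C a, C b, ~ q b & z = a / b].

Definition local_quadratic_transform A B :=
  exists y, [/\ maxideal A y, ~ ideal_pow A (maxideal A) 2 y &
    exists q, [/\ prime_ideal (blowup A y) q, sub_set (maxideal A) q &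
                  B = localize (blowup A y) q]].

Definition quadratic_sequence (R : nat -> K -> Prop) :=
  forall i : nat,
    [/\ exists d, (2 <= d)%N /\ regular_local (R i) d,
        local_quadratic_transform (R i) (R i.+1) &
        sub_set (R i) (R i.+1) /\ R i <> R i.+1].

Definition has_fraction_field A :=
  forall z, exists a b, [/\ A a, A b, b <> 0 & z = a / b].

Definition union_ring (R : nat -> K -> Prop) z := exists i, R i z.
Definition union_max (R : nat -> K -> Prop) z := exists i, maxideal (R i) z.

Definition principal A (x : K) z := exists s, A s /\ z = x * s.

(* Ideals of A/I are
   represented (correspondence theorem) by ideals of A containing I; units of
   A/I by elements a with a*b - 1 in I for some b in A.  Conditions: A/I is a
   domain (I prime), x is nonzero in A/I, the non-units of A/I are exactly the
   image of xA (so A/I is local with maximal ideal (x)), and A/I is a PID. *)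
Definition quotient_DVR A I (x : K) :=
  [/\ prime_ideal A I, A x, ~ I x,
      (forall a, A a -> ((~ exists b, A b /\ I (a * b - 1)) <->
                          exists s, A s /\ I (a - x * s)))
    & forall J, ideal A J -> sub_set I J ->
        exists g, A g /\ J = (fun z => A z /\ exists a, A a /\ I (z - a * g))].

Definition valuation_ring V :=
  subring V /\ forall z, z <> 0 -> V z \/ V z^-1.

Definition bir_dominates V S N :=
  [/\ valuation_ring V, sub_set S V & forall z, S z -> (maxideal V z <-> N z)].

End CommAlg.

From mathcomp Require Import all_boot all_algebra.
From mathcomp Require Import ring zify.
From mathcomp Require boolp classical_sets.
From Stdlib Require Import Classical.
Set Implicit Arguments. Unset Strict Implicit. Unset Printing Implicit Defensive.
Import GRing.Theory.
Local Open Scope ring_scope.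

(* (1) => (2): when [N = xS], every element of [S] is [x^m] times a unit unless it
   is divisible by all powers of [x]; these elements form [P], which is prime with
   [S/P] a DVR uniformized by [x], and dividing by [x^m u] keeps [P] stable, so
   [P = P S_P].  (2) => (1): a non-unit of [S] is congruent to a multiple of [x]
   modulo [P], and [P] lies in [xS] because [P = P S_P] and [x] is not in [P].
   (1) => (3) is immediate.  (3) => (4): a valuation ring dominating [S] exists
   (Chevalley: a maximal pair (subring, proper ideal) over [S] is a valuation ring);
   if [x] were in [m_i^2] then [xV] would lie in [m_i^2 V = x^2 V], making [x] a unit.
   (4) => (1): if [m_i/y] lies in [R_(i+1)] with [y] in [m_(i+1)], then [x/y] is a
   unit of [R_(i+1)] (otherwise [x] is in [m_(i+1)^2]), so [m_i] lies in [xS]. *)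

Lemma ex_minP (P : nat -> Prop) :
  (exists n, P n) -> exists n, P n /\ forall k, P k -> (n <= k)%N.
Proof.
move=> [n Pn]; have hb : exists n, boolp.asbool (P n) by exists n; apply/boolp.asboolP.
case: (ex_minnP hb) => m /boolp.asboolP Pm minm.
by exists m; split => // k /boolp.asboolP /minm.
Qed.

Lemma pred_ext (T : Type) (P Q : T -> Prop) : (forall z, P z <-> Q z) -> P = Q.
Proof. by move=> h; apply: boolp.funext => z; apply: boolp.propext. Qed.

Section Ideals.
Variable K : fieldType.
Implicit Types (A I G : K -> Prop).

Lemma subring1 A : subring A -> A 1. Proof. by case. Qed.
Lemma subringB A a b : subring A -> A a -> A b -> A (a - b). Proof. by case=> _ h _; apply: h. Qed.
Lemma subringM A a b : subring A -> A a -> A b -> A (a * b). Proof. by case=> _ _ h; apply: h. Qed.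
Lemma subring0 A : subring A -> A 0.
Proof. by move=> h; rewrite -(subrr 1); apply: subringB => //; apply: subring1. Qed.
Lemma subringN A a : subring A -> A a -> A (- a).
Proof. by move=> h ha; rewrite -sub0r; apply: subringB => //; apply: subring0. Qed.
Lemma subringD A a b : subring A -> A a -> A b -> A (a + b).
Proof. by move=> h ha hb; rewrite -(opprK b); apply: subringB => //; apply: subringN. Qed.
Lemma subringX A a n : subring A -> A a -> A (a ^+ n).
Proof.
move=> h ha; elim: n => [|n ih]; first by rewrite expr0; apply: subring1.
by rewrite exprS; apply: subringM.
Qed.
Lemma subring_sum A (T : Type) (r : seq T) (P : pred T) (F : T -> K) :
  subring A -> (forall t, P t -> A (F t)) -> A (\sum_(t <- r | P t) F t).
Proof.
move=> h hF; apply: (big_ind A) => //; [exact: subring0 | move=> *; exact: subringD].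
Qed.
Lemma subring_natr_bool A (b : bool) : subring A -> A b%:R.
Proof. by move=> h; case: b; [exact: subring1 | exact: subring0]. Qed.

Lemma ideal_sub A I a : ideal A I -> I a -> A a. Proof. by case=> h _ _ _; apply: h. Qed.
Lemma ideal0 A I : ideal A I -> I 0. Proof. by case. Qed.
Lemma idealD A I a b : ideal A I -> I a -> I b -> I (a + b). Proof. by case=> _ _ h _; apply: h. Qed.
Lemma idealMl A I a b : ideal A I -> A a -> I b -> I (a * b). Proof. by case=> _ _ _ h; apply: h. Qed.
Lemma idealMr A I a b : ideal A I -> I a -> A b -> I (a * b).
Proof. by move=> h ha hb; rewrite mulrC; apply: (idealMl h). Qed.
Lemma idealN A I a : subring A -> ideal A I -> I a -> I (- a).
Proof.
move=> hA h ha; rewrite -mulN1r; apply: (idealMl h) => //.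
by apply: subringN => //; apply: subring1.
Qed.
Lemma idealB A I a b : subring A -> ideal A I -> I a -> I b -> I (a - b).
Proof. by move=> hA h ha hb; apply: (idealD h) => //; apply: (idealN hA). Qed.
Lemma ideal_sum A I (T : Type) (r : seq T) (P : pred T) (F : T -> K) :
  ideal A I -> (forall t, P t -> I (F t)) -> I (\sum_(t <- r | P t) F t).
Proof.
move=> h hF; apply: (big_ind I) => //; [exact: ideal0 h | move=> *; exact: (idealD h)].
Qed.

Lemma proper_ideal_nounit A I a b : ideal A I -> ~ I 1 -> I a -> A b -> a * b <> 1.
Proof. by move=> h h1 ha hb e; apply: h1; rewrite -e; apply: (idealMr h). Qed.

Lemma notmax_unit A a : A a -> ~ maxideal A a -> unit_in A a.
Proof. by move=> ha h; apply: NNPP => hn; apply: h. Qed.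

Lemma maxideal_not1 A : subring A -> ~ maxideal A 1.
Proof.
by move=> h [_ []]; split; [exact: subring1 | exists 1; split; [exact: subring1 | exact: mulr1]].
Qed.

Lemma principal_ideal A x : subring A -> A x -> ideal A (principal A x).
Proof.
move=> hA hx; split.
- by move=> z [s [hs ->]]; apply: subringM.
- by exists 0; split; [exact: subring0 | rewrite mulr0].
- by move=> a b [s [hs ->]] [t [ht ->]]; exists (s + t); split; [exact: subringD | rewrite mulrDr].
- by move=> a b ha [s [hs ->]]; exists (a * s); split; [exact: subringM | rewrite mulrCA].
Qed.

Lemma ideal_span_sub A B I G : ideal B I -> (forall a g, A a -> G g -> I (a * g)) ->
  sub_set (ideal_span A G) I.
Proof.
move=> hI h z [s [hs ->]]; rewrite big_seq; apply: (ideal_sum _ hI) => t ts.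
by have [h1 h2] := hs t ts; apply: h.
Qed.

Lemma ideal_span_mul A G a g : A a -> G g -> ideal_span A G (a * g).
Proof.
move=> ha hg; exists [:: (a, g)]; split; last by rewrite big_cons big_nil addr0.
by move=> t; rewrite inE => /eqP ->.
Qed.

Lemma ideal_pow0 A I k : ideal_pow A I k 0.
Proof. by exists [::]; split => //; rewrite big_nil. Qed.

Lemma ideal_pow2_mul A I a b : subring A -> I a -> I b -> ideal_pow A I 2 (a * b).
Proof.
move=> hA ha hb; rewrite -[a * b]mul1r; apply: ideal_span_mul; first exact: subring1.
exists [:: a; b]; split => //; last by rewrite !big_cons big_nil mulr1.
by move=> c; rewrite !inE => /orP [/eqP ->|/eqP ->].
Qed.

End Ideals.

Section UnitPolynomials.
Variable K : fieldType.
Implicit Types (A I : K -> Prop).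

Definition coefs_in (C : K -> Prop) (p : {poly K}) := forall k, C p`_k.

Lemma coefs_in_scale A I c r : ideal A I -> I c -> coefs_in A r -> coefs_in I (c *: r).
Proof. by move=> h hc hr k; rewrite coefZ; apply: (idealMr h). Qed.

Lemma coefs_in_polyC (C : K -> Prop) c : C c -> C 0 -> coefs_in C c%:P.
Proof. by move=> hc h0 k; rewrite coefC; case: (k == 0%N). Qed.

(* [T] is the reversal of [q - q_0], shifted to degree [< n] and divided by [1 - q_0]. *)
Lemma reciprocal_poly_relation A (z w : K) q n : subring A -> z != 0 ->
  coefs_in A q -> q.[z^-1] = 1 -> A w -> (1 - q`_0) * w = 1 -> (size q <= n.+1)%N ->
  exists T, [/\ coefs_in A T, T.[z] = z ^+ n & (size T <= n)%N].
Proof.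
move=> hA z0 qA qz wA ew sqn.
have q0 : (0 < size q)%N.
  rewrite lt0n size_poly_eq0; apply/eqP => e; move: qz; rewrite e horner0 => /eqP.
  by rewrite eq_sym oner_eq0.
have sumq : \sum_(1 <= j < size q) q`_j * z^-1 ^+ j = 1 - q`_0.
  move: qz; rewrite horner_coef -(big_mkord xpredT (fun j => q`_j * z^-1 ^+ j)).
  by rewrite big_ltn // expr0 mulr1 => <-; rewrite [q`_0 + _]addrC addrK.
exists (\sum_(1 <= j < size q) (w * q`_j) *: 'X^(n - j)); split.
- move=> k; rewrite coef_sum; apply: subring_sum => // j _.
  by rewrite coefZ coefXn; apply: subringM; [|apply: subringM|exact: subring_natr_bool].
- rewrite horner_sum.
  have -> : \sum_(1 <= j < size q) ((w * q`_j) *: 'X^(n - j)).[z] =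
            \sum_(1 <= j < size q) z ^+ n * (w * (q`_j * z^-1 ^+ j)).
    apply: eq_big_nat => j /andP [j1 jq].
    have jn : (j <= n)%N by rewrite -ltnS; apply: leq_trans jq sqn.
    by rewrite hornerZ hornerXn exprB ?unitfE // exprVn; ring.
  by rewrite -mulr_sumr -mulr_sumr sumq [w * _]mulrC ew mulr1.
- apply/leq_sizeP => k hk; rewrite coef_sum; apply: big1_seq => j.
  rewrite mem_index_iota coefZ coefXn => /andP [_ /andP [j1 jq]].
  case: eqP => [e|_]; last by rewrite mulr0.
  by move: hk; rewrite e; move: jq j1 sqn; clear; lia.
Qed.

(* The leading term [c X^(m-1)] of [p] is replaced by [c T] with [T(z) = z^(m-1)]. *)
Lemma unit_poly_shorten A I (z : K) p q :
  subring A -> ideal A I -> ~ I 1 ->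
  (forall a, A a -> ~ I a -> exists b, A b /\ a * b = 1) ->
  z != 0 -> coefs_in I p -> p.[z] = 1 -> coefs_in I q -> q.[z^-1] = 1 ->
  (size q <= size p)%N ->
  exists p', [/\ coefs_in I p', p'.[z] = 1 & (size p' < size p)%N].
Proof.
move=> hA hI hI1 hunit z0 pI pz qI qz sqp.
have IA a : I a -> A a by apply: ideal_sub hI.
have [w [wA ew]] : exists w, A w /\ (1 - q`_0) * w = 1.
  apply: hunit; first by apply: subringB => //; [exact: subring1 | exact: IA].
  by move=> h; apply: hI1; rewrite -(subrK q`_0 1); apply: (idealD hI).
have hm : (0 < size p)%N.
  by rewrite lt0n size_poly_eq0; apply/eqP => e; move: pz; rewrite e horner0 => /eqP; rewrite eq_sym oner_eq0.
set m := (size p).-1; set c := p`_m.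
have [T [TA Tz sT]] : exists T, [/\ coefs_in A T, T.[z] = z ^+ m & (size T <= m)%N].
  by apply: (reciprocal_poly_relation hA z0 _ qz wA ew) => [k|]; [exact: IA | rewrite prednK].
exists (p - c *: 'X^m + c *: T); split.
- move=> k; rewrite coefD coefB; apply: (idealD hI); last exact: (coefs_in_scale hI (pI _) TA k).
  apply: (idealB hA hI) => //; apply: (coefs_in_scale hI (pI _)).
  by move=> l; rewrite coefXn; exact: subring_natr_bool.
- by rewrite hornerD hornerD hornerN !hornerZ hornerXn Tz pz subrK.
- rewrite -(prednK hm) ltnS; apply/leq_sizeP => j hj.
  rewrite coefD coefB !coefZ coefXn (leq_sizeP _ _ sT) ?(leq_trans _ hj) // mulr0 addr0.
  move: hj; rewrite leq_eqVlt => /orP [/eqP <-|hj]; first by rewrite eqxx mulr1 subrr.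
  by rewrite (gtn_eqF hj) mulr0 subr0 nth_default // -(prednK hm).
Qed.

End UnitPolynomials.

Section Chevalley.
Variable K : fieldType.
Variable S : K -> Prop.
Hypothesis hS : subring S.
Hypothesis hN : ideal S (maxideal S).

Definition dominating_pair (AI : (K -> Prop) * (K -> Prop)) :=
  [/\ subring AI.1, sub_set S AI.1, ideal AI.1 AI.2, ~ AI.2 1 & sub_set (maxideal S) AI.2].

Definition dom_pair := {AI | dominating_pair AI}.

Definition dom_le (s t : dom_pair) : bool :=
  boolp.asbool (sub_set (sval s).1 (sval t).1 /\ sub_set (sval s).2 (sval t).2).

Lemma dom_leP s t :
  reflect (sub_set (sval s).1 (sval t).1 /\ sub_set (sval s).2 (sval t).2) (dom_le s t).
Proof. exact: boolp.asboolP. Qed.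

Lemma chain_common_member (F1 F2 : dom_pair -> K -> Prop) (B1 B2 : K -> Prop) (C : dom_pair -> Prop) a b :
  classical_sets.total_on C dom_le ->
  (forall s t, dom_le s t -> sub_set (F1 s) (F1 t)) ->
  (forall s t, dom_le s t -> sub_set (F2 s) (F2 t)) ->
  (forall t, sub_set B1 (F1 t)) -> (forall t, sub_set B2 (F2 t)) ->
  (B1 a \/ exists t, C t /\ F1 t a) -> (B2 b \/ exists t, C t /\ F2 t b) ->
  (B1 a /\ B2 b) \/ exists t, [/\ C t, F1 t a & F2 t b].
Proof.
move=> tot m1 m2 b1 b2 [ha|[s [Cs hs]]] [hb|[t [Ct ht]]].
- by left.
- by right; exists t; split => //; apply: b1.
- by right; exists s; split => //; apply: b2.
- case: (tot s t Cs Ct) => h.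
    by right; exists t; split => //; apply: (m1 s).
  by right; exists s; split => //; apply: (m2 t).
Qed.

(* [S] and its maximal ideal are adjoined so that the empty chain is bounded too. *)
Lemma dominating_pair_chain_ub (C : dom_pair -> Prop) :
  classical_sets.total_on C dom_le ->
  dominating_pair ((fun z => S z \/ exists t, C t /\ (sval t).1 z),
                   (fun z => maxideal S z \/ exists t, C t /\ (sval t).2 z)).
Proof.
move=> tot.
have m1 s t : dom_le s t -> sub_set (sval s).1 (sval t).1 by case/dom_leP.
have m2 s t : dom_le s t -> sub_set (sval s).2 (sval t).2 by case/dom_leP.
have b1 (t : dom_pair) : sub_set S (sval t).1 by case: t => ? [].
have b2 (t : dom_pair) : sub_set (maxideal S) (sval t).2 by case: t => ? [].
have gt (t : dom_pair) : dominating_pair (sval t) by case: t.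
split => /=.
- split; first by left; apply: subring1.
  + move=> a b ha hb; case: (chain_common_member tot m1 m1 b1 b1 ha hb) => [[h1 h2]|[t [Ct h1 h2]]].
      by left; apply: subringB.
    by right; exists t; split => //; case: (gt t) => h _ _ _ _; apply: subringB.
  + move=> a b ha hb; case: (chain_common_member tot m1 m1 b1 b1 ha hb) => [[h1 h2]|[t [Ct h1 h2]]].
      by left; apply: subringM.
    by right; exists t; split => //; case: (gt t) => h _ _ _ _; apply: subringM.
- by move=> z; left.
- split.
  + move=> z [h|[t [Ct h]]]; first by left; apply: (ideal_sub hN).
    by right; exists t; split => //; case: (gt t) => _ _ h' _ _; apply: (ideal_sub h').
  + by left; apply: ideal0 hN.
  + move=> a b ha hb; case: (chain_common_member tot m2 m2 b2 b2 ha hb) => [[h1 h2]|[t [Ct h1 h2]]].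
      by left; apply: (idealD hN).
    by right; exists t; split => //; case: (gt t) => _ _ h _ _; apply: (idealD h).
  + move=> a b ha hb; case: (chain_common_member tot m1 m2 b1 b2 ha hb) => [[h1 h2]|[t [Ct h1 h2]]].
      by left; apply: (idealMl hN).
    by right; exists t; split => //; case: (gt t) => _ _ h _ _; apply: (idealMl h).
- move=> [h|[t [Ct h]]]; first exact: (maxideal_not1 hS).
  by case: (gt t) => _ _ _ h' _; apply: h'.
- by move=> z hz; left.
Qed.

Lemma exists_maximal_dominating_pair : exists A I, dominating_pair (A, I) /\
  forall B J, dominating_pair (B, J) -> sub_set A B -> sub_set I J ->
    sub_set B A /\ sub_set J I.
Proof.
have base : dominating_pair (S, maxideal S) by split => //; exact: maxideal_not1.
have [[[A I] hAI] tmax] : exists t : dom_pair, forall s, dom_le t s -> dom_le s t.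
  apply: (@classical_sets.ZL_preorder _ (exist _ _ base) dom_le).
  - by move=> t; apply/dom_leP; split.
  - move=> r s t /dom_leP [h1 h2] /dom_leP [h3 h4]; apply/dom_leP.
    by split => z hz; [apply: h3; apply: h1 | apply: h4; apply: h2].
  move=> C tot; exists (exist _ _ (dominating_pair_chain_ub tot)) => s Cs.
  by apply/dom_leP; split => z hz; right; exists s.
exists A, I; split => // B J hBJ hAB hIJ.
by apply/(dom_leP (exist _ _ hBJ) (exist _ _ hAI))/tmax/dom_leP.
Qed.

Section MaximalPair.
Variables A I : K -> Prop.
Hypothesis hA : subring A.
Hypothesis SA : sub_set S A.
Hypothesis hI : ideal A I.
Hypothesis hI1 : ~ I 1.
Hypothesis NI : sub_set (maxideal S) I.
Hypothesis hmax : forall B J, dominating_pair (B, J) -> sub_set A B -> sub_set I J ->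
  sub_set B A /\ sub_set J I.

Let IA a : I a -> A a. Proof. exact: ideal_sub hI. Qed.

Lemma maxpair_comaximal a : A a -> ~ I a -> exists i b, [/\ I i, A b & 1 = i + a * b].
Proof.
move=> ha hna; apply: NNPP => hno.
pose J z := exists i b, [/\ I i, A b & z = i + a * b].
have IJ : sub_set I J.
  by move=> z hz; exists z, 0; split; [|exact: subring0 | rewrite mulr0 addr0].
have hJ : dominating_pair (A, J).
  split => //=.
  - split.
    + by move=> z [i [b [hi hb ->]]]; apply: subringD => //; [exact: IA | exact: subringM].
    + by apply: IJ; exact: ideal0 hI.
    + move=> u v [i [b [hi hb ->]]] [i' [b' [hi' hb' ->]]].
      exists (i + i'), (b + b'); split; [exact: (idealD hI) | exact: subringD | ].
      by rewrite mulrDr addrACA.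
    + move=> c u hc [i [b [hi hb ->]]]; exists (c * i), (c * b).
      by split; [exact: (idealMl hI) | exact: subringM | rewrite mulrDr mulrCA].
  - by move=> z /NI; apply: IJ.
apply: hna; apply: (hmax hJ (fun z h => h) IJ).2.
by exists 0, 1; split; [exact: ideal0 hI | exact: subring1 | rewrite add0r mulr1].
Qed.

Lemma maxpair_mul_notin d d' : A d -> A d' -> ~ I d -> ~ I d' -> ~ I (d * d').
Proof.
move=> hd hd' nd nd' hdd.
have [i [b [hi hb e]]] := maxpair_comaximal hd nd.
have [i' [b' [hi' hb' e']]] := maxpair_comaximal hd' nd'.
apply: hI1.
have -> : 1 = i * i' + i * (d' * b') + d * b * i' + (d * d') * (b * b').
  by rewrite -[1](mulr1 1) {1}e {1}e'; ring.
apply: (idealD hI); last by apply: (idealMr hI) => //; apply: subringM.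
apply: (idealD hI); last by apply: (idealMl hI) => //; apply: subringM.
apply: (idealD hI); first by apply: (idealMr hI) => //; apply: IA.
by apply: (idealMr hI) => //; apply: subringM.
Qed.

Lemma maxpair_notin_neq0 d : ~ I d -> d != 0.
Proof. by move=> h; apply/eqP => e; apply: h; rewrite e; apply: ideal0 hI. Qed.

Lemma maxpair_localization_pair :
  dominating_pair ((fun z => exists c d, [/\ A c, A d, ~ I d & z = c / d]),
                   (fun z => exists c d, [/\ I c, A d, ~ I d & z = c / d])).
Proof.
have nz := maxpair_notin_neq0; have prm := maxpair_mul_notin.
have frac (P : K -> Prop) c : P c -> exists c' d, [/\ P c', A d, ~ I d & c = c' / d].
  by move=> h; exists c, 1; split; [| exact: subring1 | | rewrite divr1].
split => /=.
- split; first by apply: frac; apply: subring1.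
  + move=> u v [c [d [hc hd nd ->]]] [c' [d' [hc' hd' nd' ->]]].
    exists (c * d' - c' * d), (d * d'); split; [|exact: subringM|exact: prm|].
      by apply: subringB => //; apply: subringM.
    by field; rewrite (nz _ nd) (nz _ nd').
  + move=> u v [c [d [hc hd nd ->]]] [c' [d' [hc' hd' nd' ->]]].
    exists (c * c'), (d * d'); split; [exact: subringM|exact: subringM|exact: prm|].
    by field; rewrite (nz _ nd) (nz _ nd').
- by move=> z hz; apply: frac; apply: SA.
- split.
  + by move=> z [c [d [hc hd nd ->]]]; exists c, d; split => //; apply: IA.
  + by apply: frac; apply: ideal0 hI.
  + move=> u v [c [d [hc hd nd ->]]] [c' [d' [hc' hd' nd' ->]]].
    exists (c * d' + c' * d), (d * d'); split; [|exact: subringM|exact: prm|].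
      by apply: (idealD hI); apply: (idealMr hI).
    by field; rewrite (nz _ nd) (nz _ nd').
  + move=> u v [c [d [hc hd nd ->]]] [c' [d' [hc' hd' nd' ->]]].
    exists (c * c'), (d * d'); split; [exact: (idealMl hI)|exact: subringM|exact: prm|].
    by field; rewrite (nz _ nd) (nz _ nd').
- by move=> [c [d [hc hd nd e]]]; apply: nd; rewrite -(divr1_eq (esym e)).
- by move=> z hz; apply: frac; apply: NI.
Qed.

Lemma maxpair_inv a : A a -> ~ I a -> A a^-1.
Proof.
move=> ha hna.
have [hBA _] := hmax maxpair_localization_pair
  (fun z h => ex_intro _ z (ex_intro _ 1 (And4 h (subring1 hA) hI1 (esym (divr1 z)))))
  (fun z h => ex_intro _ z (ex_intro _ 1 (And4 h (subring1 hA) hI1 (esym (divr1 z))))).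
by apply: hBA; exists 1, a; split => //; [exact: subring1 | rewrite div1r].
Qed.

Lemma maxpair_maxideal : maxideal A = I.
Proof.
apply: pred_ext => a; split.
  move=> [ha hu]; apply: NNPP => hna; apply: hu; split => //.
  exists a^-1; split; first exact: maxpair_inv.
  by rewrite divff // maxpair_notin_neq0.
move=> h; split; first exact: IA.
by move=> [_ [b [hb e]]]; apply: (proper_ideal_nounit hI hI1 h hb e).
Qed.

Lemma maxpair_unit a : A a -> ~ I a -> exists b, A b /\ a * b = 1.
Proof.
move=> ha hna; exists a^-1; split; first exact: maxpair_inv.
by rewrite divff // maxpair_notin_neq0.
Qed.

Lemma maxpair_adjoin_pair z : ~ (exists p, coefs_in I p /\ p.[z] = 1) ->
  dominating_pair ((fun u => exists p, coefs_in A p /\ u = p.[z]),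
                   (fun u => exists p, coefs_in I p /\ u = p.[z])).
Proof.
move=> hno.
have cst (C : K -> Prop) c : C c -> C 0 -> exists p, coefs_in C p /\ c = p.[z].
  by move=> hc h0; exists c%:P; split; [exact: coefs_in_polyC | rewrite hornerC].
split => /=.
- split; first by apply: cst; [exact: subring1 | exact: subring0].
  + move=> u v [p [hp ->]] [q [hq ->]]; exists (p - q); split; last by rewrite hornerD hornerN.
    by move=> k; rewrite coefB; apply: subringB.
  + move=> u v [p [hp ->]] [q [hq ->]]; exists (p * q); split; last by rewrite hornerM.
    by move=> k; rewrite coefM; apply: subring_sum => // j _; apply: subringM.
- by move=> u hu; apply: cst; [exact: SA | exact: subring0].
- split.
  + by move=> u [p [hp ->]]; exists p; split => // k; apply: IA.
  + by apply: cst; exact: ideal0 hI.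
  + move=> u v [p [hp ->]] [q [hq ->]]; exists (p + q); split; last by rewrite hornerD.
    by move=> k; rewrite coefD; apply: (idealD hI).
  + move=> u v [p [hp ->]] [q [hq ->]]; exists (p * q); split; last by rewrite hornerM.
    by move=> k; rewrite coefM; apply: (ideal_sum _ hI) => j _; apply: (idealMl hI).
- by move=> [p [hp e]]; apply: hno; exists p.
- by move=> u hu; apply: cst; [exact: NI | exact: ideal0 hI].
Qed.

Lemma maxpair_notin_poly z : ~ A z -> exists p, coefs_in I p /\ p.[z] = 1.
Proof.
move=> hz; apply: NNPP => hno.
have [hzA _] := hmax (maxpair_adjoin_pair hno)
  (fun u h => ex_intro _ u%:P (conj (coefs_in_polyC h (subring0 hA)) (esym (hornerC u z))))
  (fun u h => ex_intro _ u%:P (conj (coefs_in_polyC h (ideal0 hI)) (esym (hornerC u z)))).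
apply: hz; apply: hzA; exists 'X; split; last by rewrite hornerX.
by move=> k; rewrite coefX; exact: subring_natr_bool.
Qed.

Lemma maxpair_valuation z : z != 0 -> A z \/ A z^-1.
Proof.
move=> z0; apply: NNPP => /not_or_and [nz1 nz2].
pose rel u k := exists p, [/\ coefs_in I p, p.[u] = 1 & size p = k].
have minrel u : ~ A u -> exists p, [/\ coefs_in I p, p.[u] = 1 &
    forall p', coefs_in I p' -> p'.[u] = 1 -> (size p <= size p')%N].
  move=> hu; have [p0 [p0I p0u]] := maxpair_notin_poly hu.
  have [k [[p [pI pu sp]] kmin]] := @ex_minP (rel u) (ex_intro _ _ (ex_intro _ p0 (And3 p0I p0u erefl))).
  by exists p; split => // p' p'I p'u; rewrite sp; apply: kmin; exists p'.
have [p [pI pz pmin]] := minrel z nz1.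
have [q [qI qz qmin]] := minrel z^-1 nz2.
have hunit := maxpair_unit.
case: (leqP (size q) (size p)) => hs.
  have [p' [p'I p'z sp']] := unit_poly_shorten hA hI hI1 hunit z0 pI pz qI qz hs.
  by have := pmin p' p'I p'z; rewrite leqNgt sp'.
have pz' : p.[z^-1^-1] = 1 by rewrite invrK.
have [q' [q'I q'z sq']] :=
  unit_poly_shorten hA hI hI1 hunit (invr_neq0 z0) qI qz pI pz' (ltnW hs).
by have := qmin q' q'I q'z; rewrite leqNgt sq'.
Qed.

End MaximalPair.

Lemma exists_dominating_valuation : exists V, [/\ valuation_ring V, sub_set S V,
  ideal V (maxideal V) & forall z, S z -> (maxideal V z <-> maxideal S z)].
Proof.
have [A [I [[hA SA hI hI1 NI] hmax]]] := exists_maximal_dominating_pair.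
have eI := maxpair_maxideal hA SA hI hI1 NI hmax.
exists A; split => //.
- by split => // z hz; apply: (maxpair_valuation hA SA hI hI1 NI hmax); apply/eqP.
- by rewrite eI.
move=> z hz; rewrite eI; split; last exact: NI.
move=> hIz; apply: NNPP => hnm.
have [_ [b [hb e]]] := notmax_unit hz hnm.
exact: (proper_ideal_nounit hI hI1 hIz (SA _ hb) e).
Qed.

End Chevalley.

Lemma local_quadratic_transform_div (K : fieldType) (A B : K -> Prop) :
  local_quadratic_transform A B -> sub_set A B ->
  exists y, [/\ maxideal A y, y != 0, sub_set (maxideal A) (maxideal B)
              & forall a, maxideal A a -> B (a / y)].
Proof.
move=> [y [hy hy2 [q [[qI q1 _] qm eB]]]] AB.
have y0 : y != 0 by apply/eqP => e; apply: hy2; rewrite e; apply: ideal_pow0.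
exists y; split => //.
- move=> a [ha hna]; split; first exact: AB.
  move=> [_ [b [hb e]]]; move: hb; rewrite eB => -[c [d [hc hd nd eb]]].
  have d0 : d != 0.
    by apply/eqP => d0; move: e; rewrite eb d0 invr0 !mulr0 => /eqP; rewrite eq_sym oner_eq0.
  have ed : d = a * c.
    by move: e; rewrite eb mulrA => /(congr1 (fun w => w * d)); rewrite mul1r divfK.
  by apply: nd; rewrite ed mulrC; apply: (idealMl qI) => //; apply: qm; split.
- move=> a ha; rewrite eB; exists (a / y), 1; split.
  + by move=> C _ _ hG; apply: hG; exists a.
  + by move=> C hC _ _; apply: subring1.
  + by [].
  + by rewrite divr1.
Qed.

Section QuadraticSequence.
Variable K : fieldType.
Variable R : nat -> K -> Prop.
Hypothesis hq : quadratic_sequence R.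

Local Notation S := (union_ring R).
Local Notation N := (union_max R).

Lemma qs_subring i : subring (R i).
Proof. by have [[d [_ [[h _] _ _ _]]] _ _] := hq i. Qed.

Lemma qs_maxideal i : ideal (R i) (maxideal (R i)).
Proof. by have [[d [_ [[_ h] _ _ _]]] _ _] := hq i. Qed.

Lemma qs_div i : exists y, [/\ maxideal (R i) y, y != 0,
  sub_set (maxideal (R i)) (maxideal (R i.+1))
  & forall a, maxideal (R i) a -> R i.+1 (a / y)].
Proof. by have [_ hlqt [hinc _]] := hq i; apply: local_quadratic_transform_div. Qed.

Lemma qs_mono i j : (i <= j)%N -> sub_set (R i) (R j).
Proof.
elim: j => [|j ih]; first by rewrite leqn0 => /eqP ->.
rewrite leq_eqVlt => /orP [/eqP -> //|hij] z hz.
by have [_ _ [hinc _]] := hq j; apply: hinc; apply: ih.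
Qed.

Lemma qs_maxideal_mono i j : (i <= j)%N -> sub_set (maxideal (R i)) (maxideal (R j)).
Proof.
elim: j => [|j ih]; first by rewrite leqn0 => /eqP ->.
rewrite leq_eqVlt => /orP [/eqP -> //|hij] z hz.
by have [y [_ _ hinc _]] := qs_div j; apply: hinc; apply: ih.
Qed.

Lemma union_ring_subring : subring S.
Proof.
have lift2 a b : S a -> S b -> exists i, R i a /\ R i b.
  move=> [i ha] [j hb]; exists (maxn i j).
  by split; [apply: (qs_mono (leq_maxl i j)) | apply: (qs_mono (leq_maxr i j))].
split; first by exists 0%N; apply: subring1 (qs_subring 0).
- by move=> a b /lift2 /[apply] -[i [ha hb]]; exists i; apply: subringB => //; exact: qs_subring.
- by move=> a b /lift2 /[apply] -[i [ha hb]]; exists i; apply: subringM => //; exact: qs_subring.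
Qed.

Lemma union_maxP z : N z <-> maxideal S z.
Proof.
split.
- move=> [i [hz hnu]]; split; first by exists i.
  move=> [_ [b [[j hb] e]]].
  have [_ []] : maxideal (R (maxn i j)) z by apply: (qs_maxideal_mono (leq_maxl i j)).
  split; first exact: (qs_mono (leq_maxl i j)).
  by exists b; split => //; apply: (qs_mono (leq_maxr i j)).
- move=> [[i hz] hnu]; exists i; split => //.
  move=> [_ [b [hb e]]]; apply: hnu; split; first by exists i.
  by exists b; split => //; exists i.
Qed.

Lemma union_max_ideal : ideal S N.
Proof.
split.
- by move=> z [i [hz _]]; exists i.
- by exists 0%N; apply: ideal0 (qs_maxideal 0).
- move=> a b [i ha] [j hb]; exists (maxn i j); apply: (idealD (qs_maxideal _)).
  + exact: (qs_maxideal_mono (leq_maxl i j)).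
  + exact: (qs_maxideal_mono (leq_maxr i j)).
- move=> a b [j ha] [i hb]; exists (maxn i j); apply: (idealMl (qs_maxideal _)).
  + exact: (qs_mono (leq_maxr i j)).
  + exact: (qs_maxideal_mono (leq_maxl i j)).
Qed.

Lemma union_ring_local : ideal S (maxideal S).
Proof.
have <- : N = maxideal S by apply: pred_ext => z; apply: union_maxP.
exact: union_max_ideal.
Qed.

Lemma union_max_not1 : ~ N 1.
Proof. by rewrite union_maxP; apply: maxideal_not1 union_ring_subring. Qed.

Lemma union_max_pow1 z : ideal_pow S N 1 z -> N z.
Proof.
apply: (ideal_span_sub union_max_ideal) => a g ha [s [ss hs ->]].
case: s ss hs => [|b []] // _ hs; rewrite big_cons big_nil mulr1.
by apply: (idealMl union_max_ideal) => //; apply: hs; rewrite inE.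
Qed.

End QuadraticSequence.

Definition power_divisible (K : fieldType) (A : K -> Prop) (x : K) z :=
  forall i, principal A (x ^+ i) z.

Section PrincipalMaximalIdeal.
Variable K : fieldType.
Variable R : nat -> K -> Prop.
Hypothesis hq : quadratic_sequence R.
Variable x : K.

Local Notation S := (union_ring R).
Local Notation N := (union_max R).
Local Notation P := (power_divisible S x).

Hypothesis eN : N = principal S x.

Let hS := union_ring_subring hq.
Let hNI := union_max_ideal hq.

Lemma principal_max_gen : N x.
Proof. by rewrite eN; exists 1; split; [exact: subring1 | rewrite mulr1]. Qed.

Lemma principal_max_gen_neq0 : x != 0.
Proof.
apply/eqP => x0; have [y [hy y0 _ _]] := qs_div hq 0.
have : N y by exists 0%N.
by rewrite eN => -[s [_ ys]]; move: y0; rewrite ys x0 mul0r eqxx.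
Qed.

Lemma principal_max_unit u : S u -> ~ N u -> exists v, S v /\ u * v = 1.
Proof. by move=> hu hnu; have [_] := notmax_unit hu (fun h => hnu (proj2 (union_maxP hq u) h)). Qed.

Lemma principal_max_nounit u v : u * v = 1 -> S v -> ~ N u.
Proof.
move=> uv hv hu; apply: (union_max_not1 hq); rewrite -uv.
exact: (idealMr hNI).
Qed.

Lemma principal_max_prod (s : seq K) : (forall a, a \in s -> N a) ->
  principal S (x ^+ size s) (\prod_(a <- s) a).
Proof.
elim: s => [|a s ih] hs.
  by exists 1; split; [exact: subring1 | rewrite big_nil expr0 mulr1].
have [d [hd ed]] := ih (fun b hb => hs b (mem_behead (s := a :: s) hb)).
have : N a by apply: hs; rewrite inE eqxx.
rewrite eN => -[c [hc ->]]; exists (c * d); split; first exact: subringM.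
by rewrite big_cons ed /= exprS; ring.
Qed.

Lemma principal_max_pow_intersection :
  (fun z => forall i : nat, (0 < i)%N -> ideal_pow S N i z) = P.
Proof.
apply: pred_ext => z; split.
- move=> h [|i].
    exists z; split; last by rewrite expr0 mul1r.
    by apply: (ideal_sub hNI); apply: (union_max_pow1 hq); apply: h.
  apply: (ideal_span_sub (principal_ideal hS (subringX _ hS (ideal_sub hNI principal_max_gen))))
    (h i.+1 isT) => a g ha [s [ss hs ->]].
  have [d [hd ->]] := principal_max_prod hs.
  by rewrite ss; exists (a * d); split; [exact: subringM | rewrite mulrCA].
- move=> h i hi; have [s [hs ->]] := h i; rewrite mulrC; apply: ideal_span_mul => //.
  exists (nseq i x); split; first by rewrite size_nseq.
    by move=> a; rewrite mem_nseq => /andP [_ /eqP ->]; apply: principal_max_gen.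
  by rewrite big_nseq -Monoid.iteropE.
Qed.

Lemma power_divisible_ideal : ideal S P.
Proof.
split.
- by move=> z h; have [s [hs ->]] := h 0%N; rewrite expr0 mul1r.
- by move=> i; exists 0; split; [exact: subring0 | rewrite mulr0].
- move=> a b ha hb i; have [s [hs ->]] := ha i; have [t [ht ->]] := hb i.
  by exists (s + t); split; [exact: subringD | rewrite mulrDr].
- move=> a b ha hb i; have [s [hs ->]] := hb i.
  by exists (a * s); split; [exact: subringM | rewrite mulrCA].
Qed.

Lemma power_divisible_max z : P z -> N z.
Proof. by move=> h; have [s [hs ->]] := h 1%N; rewrite expr1 eN; exists s. Qed.

Lemma power_divisible_not1 : ~ P 1.
Proof. by move/power_divisible_max; apply: union_max_not1. Qed.

Lemma power_divisible_notx : ~ P x.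
Proof.
move=> h; have [s [hs es]] := h 2%N.
apply: (principal_max_nounit (v := s)) principal_max_gen => //.
by apply: (mulfI principal_max_gen_neq0); rewrite mulr1 mulrA -expr2 -es.
Qed.

Lemma power_times_unit a : S a -> ~ P a ->
  exists m u v, [/\ S u, S v, u * v = 1 & a = x ^+ m * u].
Proof.
move=> ha hna.
have [k [hk kmin]] :=
  @ex_minP (fun k => ~ principal S (x ^+ k) a) (not_all_ex_not _ _ hna).
case: k hk kmin => [|m] hk kmin.
  by exfalso; apply: hk; exists a; split => //; rewrite expr0 mul1r.
have [u [hu eu]] : principal S (x ^+ m) a.
  by apply: NNPP => h; have := kmin m h; rewrite ltnn.
have [v [hv uv]] : exists v, S v /\ u * v = 1.
  apply: principal_max_unit => //; rewrite eN => -[c [hc ec]]; apply: hk.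
  by exists c; split => //; rewrite eu ec exprS; ring.
by exists m, u, v.
Qed.

Lemma power_divisible_prime : prime_ideal S P.
Proof.
split; [exact: power_divisible_ideal | exact: power_divisible_not1 |].
move=> a b ha hb hab; apply: NNPP => /not_or_and [hna hnb].
have [m [u [v [hu hv uv ea]]]] := power_times_unit ha hna.
have [n [u' [v' [hu' hv' uv' eb]]]] := power_times_unit hb hnb.
have [s [hs es]] := hab (m + n).+1%N.
have e2 : u * u' = x * s.
  apply: (mulfI (expf_neq0 (m + n) principal_max_gen_neq0)).
  have -> : x ^+ (m + n) * (x * s) = a * b by rewrite es exprSr; ring.
  by rewrite ea eb exprD; ring.
apply: (principal_max_nounit (u := u * u') (v := v * v')); first by rewrite mulrACA uv uv' mulr1.
  exact: subringM.
by rewrite e2 eN; exists s.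
Qed.

Lemma power_divisible_nonunitP a : S a ->
  (~ exists b, S b /\ P (a * b - 1)) <-> exists s, S s /\ P (a - x * s).
Proof.
have hPI := power_divisible_ideal.
move=> ha; split.
- move=> nu; have : N a.
    apply/(union_maxP hq); split => //; move=> [_ [b [hb ab]]]; apply: nu.
    by exists b; split => //; rewrite ab subrr; apply: ideal0 hPI.
  by rewrite eN => -[s [hs ->]]; exists s; split => //; rewrite subrr; exact: ideal0 hPI.
- move=> [s [hs hp]] [b [hb hp']]; apply: (union_max_not1 hq).
  have -> : 1 = ((a - x * s) * b + x * (s * b)) - (a * b - 1) by ring.
  apply: (idealB hS hNI); last exact: power_divisible_max.
  apply: (idealD hNI); first by apply: (idealMr hNI) => //; apply: power_divisible_max.
  by rewrite eN; exists (s * b); split => //; apply: subringM.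
Qed.

(* An ideal [J] containing [P] is generated modulo [P] by [x^m], where [m] is the
   least exponent of an element [x^m u] ([u] a unit) of [J] outside [P]. *)
Lemma power_divisible_quotient_principal J : ideal S J -> sub_set P J ->
  exists g, S g /\ J = (fun z => S z /\ exists a, S a /\ P (z - a * g)).
Proof.
move=> hJ PJ; have hPI := power_divisible_ideal.
case: (classic (exists j, J j /\ ~ P j)) => [[j0 [hj0 hnj0]]|hno]; last first.
  exists 0; split; first exact: subring0.
  apply: pred_ext => z; split.
  - move=> hz; split; first exact: (ideal_sub hJ).
    exists 0; split; first exact: subring0.
    by rewrite mulr0 subr0; apply: NNPP => hnp; apply: hno; exists z.
  - by move=> [hz [a [ha]]]; rewrite mulr0 subr0; apply: PJ.
pose Jpow m := exists j u v, [/\ J j, S u, S v, u * v = 1 & j = x ^+ m * u].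
have [m [[j [u [v [hj hu hv uv ej]]]] mmin]] : exists m, Jpow m /\ forall k, Jpow k -> (m <= k)%N.
  apply: ex_minP.
  have [m [u [v [hu hv uv ej]]]] := power_times_unit (ideal_sub hJ hj0) hnj0.
  by exists m, j0, u, v.
exists (x ^+ m); split; first exact: subringX (ideal_sub hNI principal_max_gen).
have xmJ : J (x ^+ m).
  have -> : x ^+ m = j * v by rewrite ej -mulrA uv mulr1.
  exact: (idealMr hJ).
apply: pred_ext => z; split.
- move=> hz; split; first exact: (ideal_sub hJ).
  case: (classic (P z)) => hpz.
    by exists 0; split; [exact: subring0 | rewrite mul0r subr0].
  have [k [w [w' [hw hw' ww' ez]]]] := power_times_unit (ideal_sub hJ hz) hpz.
  have mk : (m <= k)%N by apply: mmin; exists z, w, w'.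
  exists (x ^+ (k - m) * w); split.
    by apply: subringM => //; apply: subringX (ideal_sub hNI principal_max_gen).
  have -> : x ^+ (k - m) * w * x ^+ m = x ^+ (k - m + m) * w by rewrite exprD; ring.
  by rewrite subnK // -ez subrr; exact: ideal0 hPI.
- move=> [hz [a [ha hp]]].
  have -> : z = (z - a * x ^+ m) + a * x ^+ m by rewrite subrK.
  by apply: (idealD hJ); [exact: PJ | exact: (idealMl hJ)].
Qed.

Lemma power_divisible_quotient_DVR : quotient_DVR S P x.
Proof.
split.
- exact: power_divisible_prime.
- exact: (ideal_sub hNI principal_max_gen).
- exact: power_divisible_notx.
- exact: power_divisible_nonunitP.
- exact: power_divisible_quotient_principal.
Qed.

Lemma power_divisible_localize : P = ideal_span (localize S P) P.
Proof.
apply: pred_ext => z; split.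
- move=> hz; rewrite -[z]mul1r; apply: ideal_span_mul => //.
  exists 1, 1; split; [exact: subring1 | exact: subring1 | | by rewrite divr1].
  exact: power_divisible_not1.
- apply: (ideal_span_sub power_divisible_ideal) => a g [c [d [hc hd nd ->]]] hg i.
  have [m [u [v [hu hv uv ed]]]] := power_times_unit hd nd.
  have [s [hs eg]] := hg (i + m)%N.
  exists (c * s * v); split; first by apply: subringM => //; apply: subringM.
  have u0 : u != 0 by apply/eqP => u0; move: uv; rewrite u0 mul0r => /eqP; rewrite eq_sym oner_eq0.
  have vE : v = u^-1 by rewrite -[v]mul1r -(mulVf u0) -mulrA uv mulr1.
  rewrite ed eg vE exprD; field.
  by rewrite u0 expf_neq0 // principal_max_gen_neq0.
Qed.

End PrincipalMaximalIdeal.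

Section Equivalences.
Variable K : fieldType.
Variable R : nat -> K -> Prop.
Hypothesis hq : quadratic_sequence R.
Variable x : K.

Local Notation S := (union_ring R).
Local Notation N := (union_max R).

Let hS := union_ring_subring hq.
Let hNI := union_max_ideal hq.

Definition eventually_regular_parameter :=
  exists i0 : nat, forall i : nat, (i0 <= i)%N ->
    maxideal (R i) x /\ ~ ideal_pow (R i) (maxideal (R i)) 2 x.

Definition eventually_principal_in (V : K -> Prop) :=
  exists i0 : nat, forall i : nat, (i0 <= i)%N ->
    ideal_span V (maxideal (R i)) = principal V x.

Lemma union_max_principal_of_regular_parameter :
  eventually_regular_parameter -> N = principal S x.
Proof.
move=> [i0 h]; apply: pred_ext => z; split; last first.
  by move=> [s [hs ->]]; apply: (idealMr hNI) => //; exists i0; case: (h i0 (leqnn i0)).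
move=> [j hj]; set i := maxn j i0.
have hzi : maxideal (R i) z by apply: (qs_maxideal_mono hq (leq_maxl j i0)).
have [hxi _] := h i (leq_maxr j i0).
have [y [hy y0 hinc hdiv]] := qs_div hq i.
have xe : x = x / y * y by rewrite divfK.
have [_ [b [hb ub]]] : unit_in (R i.+1) (x / y).
  apply: notmax_unit; first exact: hdiv.
  move=> hum; have [_ h2] := h i.+1 (leq_trans (leq_maxr j i0) (leqnSn i)).
  by apply: h2; rewrite xe mulrC; apply: ideal_pow2_mul; [exact: qs_subring | exact: hinc |].
exists (b * (z / y)); split; first by exists i.+1; apply: subringM; [exact: qs_subring | |exact: hdiv].
by rewrite {1}xe mulrACA ub mul1r mulrC divfK.
Qed.

Lemma eventually_principal_of_union_max_principal V :
  S x -> N = principal S x -> bir_dominates V S N -> eventually_principal_in V.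
Proof.
move=> hx e [[hV _] SV _].
have [j hj] := principal_max_gen hq e.
exists j => i hi; apply: pred_ext => z; split.
- apply: (ideal_span_sub (principal_ideal hV (SV _ hx))) => a g ha hg.
  have : N g by exists i.
  rewrite e => -[s [hs ->]]; exists (a * s); split; first by apply: subringM => //; apply: SV.
  by rewrite mulrCA.
- move=> [v [hv ->]]; rewrite mulrC; apply: ideal_span_mul => //.
  exact: (qs_maxideal_mono hq hi).
Qed.

Lemma regular_parameter_of_eventually_principal :
  S x -> (forall V, bir_dominates V S N -> eventually_principal_in V) ->
  eventually_regular_parameter.
Proof.
move=> hx h3.
have [V [hval SV hVm dom]] := exists_dominating_valuation hS (union_ring_local hq).
have [hV _] := hval.
have [i0 hi0] : eventually_principal_in V.
  by apply: h3; split => // z hz; rewrite dom // (union_maxP hq).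
have mV i : sub_set (maxideal (R i)) (maxideal V).
  by move=> z hz; rewrite dom -?(union_maxP hq); [exists i | exists i; case: hz].
have spx i : (i0 <= i)%N -> forall a, maxideal (R i) a -> principal V x a.
  by move=> hi a ha; rewrite -(hi0 i hi) -[a]mul1r; apply: ideal_span_mul => //; exact: subring1.
have xV : maxideal V x.
  apply: (ideal_span_sub hVm (A := V) (G := maxideal (R i0))).
    by move=> a g ha hg; apply: (idealMl hVm) => //; apply: (mV i0).
  by rewrite (hi0 i0 (leqnn i0)); exists 1; split; [exact: subring1 | rewrite mulr1].
have [j hj] : N x by rewrite (union_maxP hq) -dom.
exists (maxn i0 j) => i hi; have hi0' : (i0 <= i)%N by apply: leq_trans (leq_maxl i0 j) hi.
split; first exact: (qs_maxideal_mono hq (leq_trans (leq_maxr i0 j) hi)).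
move=> hx2.
have x0 : x != 0.
  apply/eqP => x0; have [y [hy y0 _ _]] := qs_div hq i.
  by have [s [_ ys]] := spx i hi0' y hy; move: y0; rewrite ys x0 mul0r eqxx.
have [w [hw e]] : principal V (x * x) x.
  apply: (ideal_span_sub (principal_ideal hV (subringM hV (SV _ hx) (SV _ hx))) _ hx2).
  move=> a g ha [s [ss hs ->]]; case: s ss hs => [|b [|c []]] // _ hs.
  have [v1 [hv1 ->]] := spx i hi0' b (hs b (mem_head _ _)).
  have [v2 [hv2 ->]] := spx i hi0' c (hs c (mem_last b [:: c])).
  exists (a * (v1 * v2)); split.
    by apply: (subringM hV); [apply: SV; exists i | apply: (subringM hV)].
  by rewrite !big_cons big_nil; ring.
have xw : x * w = 1 by apply: (mulfI x0); rewrite mulr1 mulrA -e.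
by case: xV => _; apply; split; [exact: SV | exists w].
Qed.

Lemma union_max_principal_of_quotient_DVR (P : K -> Prop) :
  sub_set P N -> quotient_DVR S P x -> P = ideal_span (localize S P) P ->
  N = principal S x.
Proof.
move=> PN [[hPI _ _] hSx nPx hiff _] eP.
have x0 : x != 0 by apply/eqP => x0; apply: nPx; rewrite x0; apply: ideal0 hPI.
apply: pred_ext => z; split; last first.
  move=> [s [hs ->]]; apply: (idealMr hNI) => //.
  apply/(union_maxP hq); split => // -[_ [b [hb e]]].
  have hxx : exists s, S s /\ P (x - x * s).
    by exists 1; split; [exact: subring1 | rewrite mulr1 subrr; exact: ideal0 hPI].
  apply: ((hiff x hSx).2 hxx); exists b; split => //.
  by rewrite e subrr; exact: ideal0 hPI.
move=> hz; have hzS := ideal_sub hNI hz.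
have nu : ~ exists b, S b /\ P (z * b - 1).
  move=> [b [hb hp]]; apply: (union_max_not1 hq).
  have -> : 1 = z * b - (z * b - 1) by rewrite opprB addrC subrK.
  by apply: (idealB hS hNI); [exact: (idealMr hNI) | exact: PN].
have [s [hs hps]] := (hiff z hzS).1 nu.
have hpx : P (x^-1 * (z - x * s)).
  rewrite eP; apply: ideal_span_mul => //.
  by exists 1, x; split => //; [exact: subring1 | rewrite div1r].
exists (s + x^-1 * (z - x * s)); split; first by apply: subringD => //; apply: (ideal_sub hPI).
by rewrite mulrDr mulrA divff // mul1r addrC subrK.
Qed.

End Equivalences.

Theorem lemma3p4 (K : fieldType) (R : nat -> K -> Prop) (x : K) :
  has_fraction_field (R 0%N) ->
  quadratic_sequence R ->
  union_ring R x ->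
  let S := union_ring R in
  let N := union_max R in
  let P := fun z => forall i : nat, (0 < i)%N -> ideal_pow S N i z in
  [<-> N = principal S x;
       [/\ prime_ideal S P, quotient_DVR S P x & P = ideal_span (localize S P) P];
       (forall V, bir_dominates V S N ->
          exists i0 : nat, forall i : nat, (i0 <= i)%N ->
            ideal_span V (maxideal (R i)) = principal V x);
       exists i0 : nat, forall i : nat, (i0 <= i)%N ->
          maxideal (R i) x /\ ~ ideal_pow (R i) (maxideal (R i)) 2 x].
Proof.
move=> _ hq hx S N P.
have PN : sub_set P N by move=> z hz; apply: (union_max_pow1 hq); apply: hz.
tfae.
- move=> e; rewrite /P (principal_max_pow_intersection hq e); split.
  + exact: power_divisible_prime.
  + exact: power_divisible_quotient_DVR.
  + exact: power_divisible_localize.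
- move=> [_ hDVR hloc] V; apply: eventually_principal_of_union_max_principal => //.
  exact: (union_max_principal_of_quotient_DVR hq PN).
- exact: regular_parameter_of_eventually_principal.
- exact: union_max_principal_of_regular_parameter.
Qed.
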